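(* Let $W$ be an irreducible euclidean Coxeter group not of type $\widetilde A_n$ and let $\sigma$ be a chamber of its Coxeter complex. Then the bipartite line of $\sigma$ is the axis (min-set) of each of the two bipartite Coxeter elements $w_1w_0$ and $w_0w_1$ produced by $\sigma$.
   Context: $W$ acts on a euclidean space $E$, generated by reflections in the facets of a euclidean simplex with dihedral angles submultiples of $\pi$, properly and cocompactly; chambers are images of the simplex. The diagram $\Gamma$ (a tree here) has a unique bipartition, giving a partition $S_0\sqcup S_1$ of the reflections in the facets of $\sigma$ into pairwise-commuting sets; $w_j$ is the product of the reflections in $S_j$; $F_j$ is the face of $\sigma$ cut out by the hyperplanes of the reflections in $S_j$ and $B_j$ is its affine hull. $B_0,B_1$ are disjoint and there is a unique pair of points $x_0\in B_0,x_1\in B_1$ realizing the distance between them; the bipartite line of $\sigma$ is the line through $x_0,x_1$. The min-set (axis) of an isometry is the set of points it moves the minimal distance. *)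

From HB Require Import structures.
From mathcomp Require Import all_boot all_order all_algebra.
From mathcomp Require Import fingroup perm classical_sets reals trigo.
Set Implicit Arguments. Unset Strict Implicit. Unset Printing Implicit Defensive.
Import Order.TTheory GRing.Theory Num.Theory.
Local Open Scope ring_scope.
Local Open Scope classical_set_scope.

Definition dotv (R : realType) (n : nat) (x y : 'rV[R]_n) : R := (x *m y^T) 0 0.
Definition normv (R : realType) (n : nat) (x : 'rV[R]_n) : R := Num.sqrt (dotv x x).

(* A euclidean simplex sigma in R^n with n+1 facets, described by its vertices
   v i and, for each facet i (the facet opposite v i), an outward unit normal
   u i and offset c i: the facet hyperplane H_i = {x | <u i, x> = c i} contains
   all v j (j <> i) and <u i, v i> < c i. *)
Definition is_simplex_data (R : realType) (n : nat)
  (v u : 'I_n.+1 -> 'rV[R]_n) (c : 'I_n.+1 -> R) : Prop :=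
  (forall i, dotv (u i) (u i) = 1) /\
  (forall i j, i != j -> dotv (u i) (v j) = c i) /\
  (forall i, dotv (u i) (v i) < c i).

Definition simplex (R : realType) (n : nat) (v : 'I_n.+1 -> 'rV[R]_n) : set 'rV[R]_n :=
  [set x | exists l : 'I_n.+1 -> R,
     (forall k, 0 <= l k) /\ \sum_k l k = 1 /\ x = \sum_k l k *: v k].

(* Dihedral angle between facets i, j (i <> j) equals pi / m i j: with outward
   unit normals this reads <u i, u j> = - cos (pi / m i j). *)
Definition dihedral_submultiples (R : realType) (n : nat)
  (u : 'I_n.+1 -> 'rV[R]_n) (m : 'I_n.+1 -> 'I_n.+1 -> nat) : Prop :=
  forall i j, i != j -> (2 <= m i j)%N /\
    dotv (u i) (u j) = - cos (pi / (m i j)%:R).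

Definition refl (R : realType) (n : nat) (u : 'I_n.+1 -> 'rV[R]_n)
  (c : 'I_n.+1 -> R) (i : 'I_n.+1) (x : 'rV[R]_n) : 'rV[R]_n :=
  x - (2 * (dotv (u i) x - c i)) *: u i.

Definition cox_edge (n : nat) (m : 'I_n.+1 -> 'I_n.+1 -> nat) : rel 'I_n.+1 :=
  fun i j => (i != j) && (3 <= m i j)%N.

Definition cox_irreducible (n : nat) (m : 'I_n.+1 -> 'I_n.+1 -> nat) : Prop :=
  forall i j, connect (cox_edge m) i j.

(* Type A~_n (n >= 2): the diagram is a cycle through all n+1 nodes with all
   labels 3 (all non-adjacent pairs have label 2). *)
Definition is_type_tildeA (n : nat) (m : 'I_n.+1 -> 'I_n.+1 -> nat) : Prop :=
  exists p : {perm 'I_n.+1}, forall i j : 'I_n.+1, i != j ->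
    m (p i) (p j) = (if (j == ordS i) || (i == ordS j) then 3 else 2)%N.

(* A bipartition S_false, S_true of the facets into sets of pairwise commuting
   reflections (m i j = 2 for distinct i, j in the same part). *)
Definition cox_bipartition (n : nat) (m : 'I_n.+1 -> 'I_n.+1 -> nat)
  (part : 'I_n.+1 -> bool) : Prop :=
  forall i j, i != j -> part i = part j -> m i j = 2%N.

(* w_b = product of the reflections in S_b (they commute). *)
Definition wprod (R : realType) (n : nat) (u : 'I_n.+1 -> 'rV[R]_n)
  (c : 'I_n.+1 -> R) (part : 'I_n.+1 -> bool) (b : bool) : 'rV[R]_n -> 'rV[R]_n :=
  foldr (fun i f => refl u c i \o f) id [seq i <- enum 'I_n.+1 | part i == b].

Definition face (R : realType) (n : nat) (v u : 'I_n.+1 -> 'rV[R]_n)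
  (c : 'I_n.+1 -> R) (part : 'I_n.+1 -> bool) (b : bool) : set 'rV[R]_n :=
  [set x | simplex v x /\ forall i, part i = b -> dotv (u i) x = c i].

Definition aff_hull (R : realType) (n : nat) (A : set 'rV[R]_n) : set 'rV[R]_n :=
  [set x | exists (k : nat) (p : 'I_k -> 'rV[R]_n) (l : 'I_k -> R),
     (forall t, A (p t)) /\ \sum_t l t = 1 /\ x = \sum_t l t *: p t].

Definition realizes_dist (R : realType) (n : nat) (A B : set 'rV[R]_n)
  (x0 x1 : 'rV[R]_n) : Prop :=
  A x0 /\ B x1 /\ forall y0 y1, A y0 -> B y1 -> normv (x0 - x1) <= normv (y0 - y1).

Definition line_through (R : realType) (n : nat) (x0 x1 : 'rV[R]_n) : set 'rV[R]_n :=
  [set x | exists t : R, x = x0 + t *: (x1 - x0)].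

Definition disp_minset (R : realType) (n : nat) (f : 'rV[R]_n -> 'rV[R]_n) : set 'rV[R]_n :=
  [set x | forall y, normv (f x - x) <= normv (f y - y)].

From HB Require Import structures.
From mathcomp Require Import all_boot all_order all_algebra.
From mathcomp Require Import fingroup perm classical_sets reals trigo.
From mathcomp Require Import ring.
Import Order.TTheory GRing.Theory Num.Theory.
Local Open Scope ring_scope.
Local Open Scope classical_set_scope.

(* The reflections in S_b act in pairwise orthogonal hyperplanes, so w_b is
   the orthogonal reflection in the flat B_b = ⋂_{i ∈ S_b} H_i, i.e.
   w_b = 2 P_b - id with P_b the orthogonal projection onto B_b.  The facet
   normals span E and satisfy exactly one linear relation,
   Σ_k u_k / h_k = 0 (h_k the height of σ over facet k).  Hence the
   directions of B_0 and B_1 span E, and the only direction orthogonal to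
   both is that of z = Σ_{k ∈ S_1} u_k / h_k = - Σ_{k ∈ S_0} u_k / h_k.
   With d = x_1 - x_0 the common perpendicular, every q - p (p ∈ B_0,
   q ∈ B_1) splits orthogonally as d + e(p, q), and e vanishes only at
   (x_0, x_1).  Finally w_1 w_0 y - y has the length of
   w_0 y - w_1 y = 2 (P_1 y - P_0 y), whose square is
   4 (|d|^2 + |e(P_0 y, P_1 y)|^2): it is minimal exactly when P_0 y = x_0
   and P_1 y = x_1, that is on the line through x_0 and x_1.
   Irreducibility is only used to know that S_0 and S_1 are both nonempty. *)

Lemma sumr_indicator {K : pzSemiRingType} {m : nat} (a : 'I_m) (F : 'I_m -> K) :
  \sum_k F k * (k == a)%:R = F a.
Proof.
by rewrite (bigD1 a) //= eqxx mulr1 big1 ?addr0 // => k /negbTE ->; rewrite mulr0.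
Qed.

Lemma sumr_indicator1 {K : pzSemiRingType} {m : nat} (a : 'I_m) :
  \sum_k ((k == a)%:R : K) = 1.
Proof. by rewrite (bigD1 a) //= eqxx big1 ?addr0 // => k /negbTE ->. Qed.

Lemma subrBB (V : zmodType) (y a b : V) : (y - a) - (y - b) = b - a.
Proof. by rewrite opprB addrC addrA subrK. Qed.

Lemma unitmx_row_eq0 (F : fieldType) (n : nat) (M : 'M[F]_n) (y : 'rV[F]_n) :
  M \in unitmx -> M *m y^T = 0 -> y = 0.
Proof.
move=> Mu /(congr1 (mulmx (invmx M))); rewrite mulKmx // mulmx0 => /eqP.
by rewrite -trmx0 (inj_eq (@trmx_inj _ _ _)) => /eqP.
Qed.

Section Dot.
Variables (R : realType) (n : nat).
Implicit Types x y z : 'rV[R]_n.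

Lemma dotvE x y : dotv x y = \sum_j x 0 j * y 0 j.
Proof. by rewrite /dotv mxE; apply: eq_bigr => j _; rewrite mxE. Qed.

Lemma dotvC x y : dotv x y = dotv y x.
Proof. by rewrite !dotvE; apply: eq_bigr => j _; rewrite mulrC. Qed.

Lemma dotvDl x y z : dotv (x + y) z = dotv x z + dotv y z.
Proof. by rewrite !dotvE -big_split; apply: eq_bigr => j _; rewrite mxE mulrDl. Qed.

Lemma dotvZl a x y : dotv (a *: x) y = a * dotv x y.
Proof. by rewrite !dotvE mulr_sumr; apply: eq_bigr => j _; rewrite mxE mulrA. Qed.

Lemma dotvNl x y : dotv (- x) y = - dotv x y.
Proof. by rewrite -scaleN1r dotvZl mulN1r. Qed.

Lemma dotvBl x y z : dotv (x - y) z = dotv x z - dotv y z.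
Proof. by rewrite dotvDl dotvNl. Qed.

Lemma dotv0l x : dotv 0 x = 0.
Proof. by rewrite -(scale0r 0) dotvZl mul0r. Qed.

Lemma dotvDr x y z : dotv x (y + z) = dotv x y + dotv x z.
Proof. by rewrite dotvC dotvDl !(dotvC x). Qed.

Lemma dotvZr a x y : dotv x (a *: y) = a * dotv x y.
Proof. by rewrite dotvC dotvZl dotvC. Qed.

Lemma dotvNr x y : dotv x (- y) = - dotv x y.
Proof. by rewrite dotvC dotvNl dotvC. Qed.

Lemma dotvBr x y z : dotv x (y - z) = dotv x y - dotv x z.
Proof. by rewrite dotvDr dotvNr. Qed.

Lemma dotv0r x : dotv x 0 = 0.
Proof. by rewrite dotvC dotv0l. Qed.

Lemma dotvNN x y : dotv (- x) (- y) = dotv x y.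
Proof. by rewrite dotvNl dotvNr opprK. Qed.

Lemma dotv_suml (I : Type) (r : seq I) (P : pred I) (F : I -> 'rV[R]_n) y :
  dotv (\sum_(i <- r | P i) F i) y = \sum_(i <- r | P i) dotv (F i) y.
Proof. by elim/big_rec2: _ => [|i a b _ <-]; rewrite ?dotv0l ?dotvDl. Qed.

Lemma dotv_sumr (I : Type) (r : seq I) (P : pred I) (F : I -> 'rV[R]_n) y :
  dotv y (\sum_(i <- r | P i) F i) = \sum_(i <- r | P i) dotv y (F i).
Proof. by rewrite dotvC dotv_suml; apply: eq_bigr => i _; rewrite dotvC. Qed.

Lemma dotv_ge0 x : 0 <= dotv x x.
Proof. by rewrite dotvE; apply: sumr_ge0 => j _; rewrite -expr2 sqr_ge0. Qed.

Lemma dotv_eq0 x : dotv x x = 0 -> x = 0.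
Proof.
rewrite dotvE => /eqP; rewrite psumr_eq0; last by move=> j _; rewrite -expr2 sqr_ge0.
move=> /allP x0; apply/rowP => j; rewrite mxE.
by have := x0 j (mem_index_enum j); rewrite /= mulf_eq0 orbb => /eqP.
Qed.

Lemma normv_le x y : (normv x <= normv y) = (dotv x x <= dotv y y).
Proof. by rewrite /normv ler_sqrt // dotv_ge0. Qed.

Lemma dotv_eq0_le a x : a + dotv x x <= a -> x = 0.
Proof.
rewrite -[X in _ <= X]addr0 lerD2l => le0.
by apply: dotv_eq0; apply/eqP; rewrite eq_le le0 dotv_ge0.
Qed.

End Dot.
Arguments dotvC {R n}.

Section Simplex.
Variables (R : realType) (n : nat) (v u : 'I_n.+1 -> 'rV[R]_n) (c : 'I_n.+1 -> R).
Hypothesis u_unit : forall i, dotv (u i) (u i) = 1.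
Hypothesis u_facet : forall i j, i != j -> dotv (u i) (v j) = c i.
Hypothesis u_vertex : forall i, dotv (u i) (v i) < c i.

Definition height i := c i - dotv (u i) (v i).

Lemma height_gt0 i : 0 < height i.
Proof. by rewrite subr_gt0. Qed.

Lemma height_neq0 i : height i != 0.
Proof. by rewrite gt_eqF ?height_gt0. Qed.

Lemma dotv_normal_vertex i k : dotv (u i) (v k) = c i - height i * (i == k)%:R.
Proof.
case: eqP => [->|/eqP ik]; first by rewrite mulr1 opprB addrC subrK.
by rewrite mulr0 subr0 u_facet.
Qed.

Lemma dotv_normal_edge j k : k != ord0 ->
  dotv (u j) (v k - v ord0) = height j * ((j == ord0)%:R - (j == k)%:R).
Proof. by move=> k0; rewrite dotvBr !dotv_normal_vertex; ring. Qed.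

Let normal_mx : 'M[R]_n := \matrix_(k, j) u (lift ord0 k) 0 j.
Let edge_mx : 'M[R]_n :=
  \matrix_(k, j) ((- (height (lift ord0 k))^-1) *: (v (lift ord0 k) - v ord0)) 0 j.

Lemma normal_edge_dual : normal_mx *m edge_mx^T = 1%:M.
Proof.
apply/matrixP => k l; rewrite !mxE.
transitivity (dotv (u (lift ord0 k))
  ((- (height (lift ord0 l))^-1) *: (v (lift ord0 l) - v ord0))).
  by rewrite dotvE; apply: eq_bigr => j _; rewrite !mxE.
rewrite dotvZr dotv_normal_edge ?neq_lift // eq_sym (negbTE (neq_lift _ _)).
rewrite (inj_eq (@lift_inj _ ord0)); case: eqP => [->|_] /=.
  by rewrite sub0r mulrN1 mulrNN mulVf ?height_neq0.
by rewrite subrr !mulr0.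
Qed.

Lemma orthogonal_normals_eq0 y :
  (forall k, k != ord0 -> dotv (u k) y = 0) -> y = 0.
Proof.
move=> yo; have [Nu _] := mulmx1_unit normal_edge_dual.
apply: (@unitmx_row_eq0 _ _ normal_mx y Nu); apply/matrixP => k i; rewrite ord1 [RHS]mxE.
transitivity (dotv (u (lift ord0 k)) y); last by rewrite yo ?neq_lift.
by rewrite dotvE !mxE; apply: eq_bigr => j _; rewrite !mxE.
Qed.

Lemma orthogonal_edges_eq0 w :
  (forall k, k != ord0 -> dotv w (v k - v ord0) = 0) -> w = 0.
Proof.
move=> wo; have [_ /[!unitmx_tr] Eu] := mulmx1_unit normal_edge_dual.
apply: (@unitmx_row_eq0 _ _ edge_mx w Eu).
apply/matrixP => k i; rewrite ord1 [RHS]mxE mxE.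
transitivity (dotv ((- (height (lift ord0 k))^-1) *:
  (v (lift ord0 k) - v ord0)) w).
  by rewrite dotvE; apply: eq_bigr => j _; rewrite !mxE.
by rewrite dotvZl dotvC wo ?neq_lift // mulr0.
Qed.

Lemma normal_relation : \sum_k (height k)^-1 *: u k = 0.
Proof.
apply: orthogonal_edges_eq0 => k k0; rewrite dotv_suml.
transitivity (\sum_j (((j == ord0)%:R : R) - (j == k)%:R)).
  by apply: eq_bigr => j _; rewrite dotvZl dotv_normal_edge // mulKf ?height_neq0.
by rewrite sumrB !sumr_indicator1 subrr.
Qed.

Lemma normal_relation_unique (gam : 'I_n.+1 -> R) : \sum_k gam k *: u k = 0 ->
  forall k, gam k * height k = gam ord0 * height ord0.
Proof.
move=> rel k; have [->|k0] := eqVneq k ord0; first by [].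
have := congr1 (fun w => dotv w (v k - v ord0)) rel; rewrite /= dotv0l dotv_suml.
under eq_bigr => j _ do rewrite dotvZl dotv_normal_edge // mulrA mulrBr.
rewrite sumrB (sumr_indicator ord0 (fun j => gam j * height j)).
by rewrite (sumr_indicator k (fun j => gam j * height j)) => /eqP; rewrite subr_eq0 => /eqP.
Qed.

Definition barycoord x k := (c k - dotv (u k) x) / height k.

Lemma barycoord_vertex j k : barycoord (v j) k = (k == j)%:R.
Proof.
by rewrite /barycoord dotv_normal_vertex opprB addrC subrK mulrC mulKf ?height_neq0.
Qed.

Lemma barycoord_sum x : \sum_k barycoord x k = 1.
Proof.
have -> : \sum_k barycoord x k = \sum_k barycoord (v ord0) k +
    dotv (\sum_k (height k)^-1 *: u k) (v ord0 - x).
  rewrite dotv_suml -big_split /=; apply: eq_bigr => k _.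
  by rewrite /barycoord dotvZl dotvBr; field; exact: height_neq0.
rewrite normal_relation dotv0l addr0.
by under eq_bigr => k _ do rewrite barycoord_vertex; rewrite sumr_indicator1.
Qed.

Lemma dotv_normal_comb (mu : 'I_n.+1 -> R) i : \sum_k mu k = 1 ->
  dotv (u i) (\sum_k mu k *: v k) = c i - height i * mu i.
Proof.
move=> mu1; rewrite dotv_sumr.
under eq_bigr => k _ do rewrite dotvZr dotv_normal_vertex mulrBr.
rewrite sumrB -mulr_suml mu1 mul1r; congr (_ - _).
rewrite -(sumr_indicator i (fun k => height i * mu k)); apply: eq_bigr => k _.
by rewrite eq_sym; ring.
Qed.

Lemma barycoordK x : x = \sum_k barycoord x k *: v k.
Proof.
apply/eqP; rewrite -subr_eq0; apply/eqP; apply: orthogonal_normals_eq0 => k _.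
by rewrite dotvBr dotv_normal_comb ?barycoord_sum // /barycoord; field; exact: height_neq0.
Qed.

Section Bipartite.
Variable part : 'I_n.+1 -> bool.
Hypothesis part_orth : forall i j, i != j -> part i = part j -> dotv (u i) (u j) = 0.

Lemma dotv_normal_sum b i (al : 'I_n.+1 -> R) : part i = b ->
  dotv (u i) (\sum_(j | part j == b) al j *: u j) = al i.
Proof.
move=> pi; rewrite dotv_sumr (bigD1 i) /= ?pi ?eqxx //.
rewrite big1 ?addr0; first by rewrite dotvZr u_unit mulr1.
move=> j /andP [/eqP pj ji]; rewrite dotvZr part_orth ?mulr0 ?pi ?pj //.
by rewrite eq_sym.
Qed.

Definition flat b x := forall i, part i = b -> dotv (u i) x = c i.

(* As the normals of one part are orthonormal, [proj b] is the orthogonal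
   projection onto [flat b]. *)
Definition offset b x := \sum_(i | part i == b) (dotv (u i) x - c i) *: u i.
Definition proj b x := x - offset b x.

Lemma dotv_normal_offset b x i : part i = b ->
  dotv (u i) (offset b x) = dotv (u i) x - c i.
Proof. exact: dotv_normal_sum. Qed.

Lemma proj_flat b x : flat b (proj b x).
Proof. by move=> i pi; rewrite dotvBr dotv_normal_offset //; ring. Qed.

Lemma offsetB b x y :
  offset b x - offset b y = \sum_(i | part i == b) dotv (u i) (x - y) *: u i.
Proof.
rewrite /offset -sumrB; apply: eq_bigr => i _.
by rewrite -scalerBl dotvBr; congr (_ *: _); ring.
Qed.

Lemma foldr_reflE b (s : seq 'I_n.+1) x : uniq s -> all (fun j => part j == b) s ->
  foldr (fun i f => refl u c i \o f) id s x =
  x - 2 *: \sum_(i <- s) (dotv (u i) x - c i) *: u i.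
Proof.
elim: s => [|i s IH] /=; first by rewrite big_nil scaler0 subr0.
move=> /andP [nis us] /andP [/eqP pi As]; rewrite IH // big_cons /refl.
have -> : dotv (u i) (x - 2 *: \sum_(j <- s) (dotv (u j) x - c j) *: u j) = dotv (u i) x.
  rewrite dotvBr dotvZr dotv_sumr big_seq big1 ?mulr0 ?subr0 // => j js.
  rewrite dotvZr part_orth ?mulr0 //; first by apply: contraNneq nis => ->.
  by move/allP: As => /(_ j js) /eqP ->.
by rewrite scalerDr scalerA opprD addrA addrAC.
Qed.

Lemma wprodE b x : wprod u c part b x = x - 2 *: offset b x.
Proof.
rewrite /wprod (foldr_reflE b); last 2 first.
- exact: filter_uniq (enum_uniq _).
- exact: filter_all.
by rewrite big_filter big_enum_cond /offset; congr (_ - 2 *: _); apply: eq_bigl.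
Qed.

Lemma wprodK b : involutive (wprod u c part b).
Proof.
move=> y; rewrite !wprodE.
have -> : offset b (y - 2 *: offset b y) = - offset b y.
  rewrite {1}/offset [in RHS]/offset -sumrN; apply: eq_bigr => i /eqP pi.
  by rewrite dotvBr dotvZr dotv_normal_offset // -scaleNr; congr (_ *: _); ring.
by rewrite scalerN opprK subrK.
Qed.

Lemma wprod_isometry b x y :
  dotv (wprod u c part b x - wprod u c part b y) (wprod u c part b x - wprod u c part b y)
  = dotv (x - y) (x - y).
Proof.
rewrite !wprodE.
have -> : x - 2 *: offset b x - (y - 2 *: offset b y) =
    (x - y) - 2 *: (offset b x - offset b y).
  by rewrite scalerBr !opprD !opprK addrACA.
rewrite offsetB; set h := x - y; set L := \sum_(i | part i == b) _.
have hL : dotv h L = \sum_(i | part i == b) dotv (u i) h ^+ 2.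
  by rewrite dotv_sumr; apply: eq_bigr => i _; rewrite dotvZr dotvC expr2.
have LL : dotv L L = \sum_(i | part i == b) dotv (u i) h ^+ 2.
  rewrite {1}/L dotv_suml; apply: eq_bigr => i /eqP pi.
  by rewrite dotvZl dotv_normal_sum // expr2.
clearbody L h; rewrite !(dotvBl, dotvBr, dotvZl, dotvZr) (dotvC L h) hL LL; ring.
Qed.

Lemma wprod_sub b0 b1 y :
  wprod u c part b1 y - wprod u c part b0 y = 2 *: (proj b1 y - proj b0 y).
Proof. by rewrite !wprodE /proj !subrBB scalerBr. Qed.

Hypothesis part_nonempty : forall b, exists j, part j = b.

Lemma sum_parts (F : 'I_n.+1 -> 'rV[R]_n) :
  \sum_k F k = \sum_(k | part k == false) F k + \sum_(k | part k == true) F k.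
Proof.
rewrite (bigID (fun k => part k == false)) /=; congr (_ + _); apply: eq_bigl => k.
by case: (part k).
Qed.

Definition zdir b := \sum_(k | part k == b) (height k)^-1 *: u k.

(* [zdir true = - zdir false] lies in the span of the normals of either part,
   so it is orthogonal to both flats. *)
Lemma zdirN : zdir false = - zdir true.
Proof. by apply/eqP; rewrite -addr_eq0 /zdir -sum_parts normal_relation. Qed.

Definition zsq := \sum_(k | part k) (height k)^-1 ^+ 2.

Lemma zsq_gt0 : 0 < zsq.
Proof.
have [j pj] := part_nonempty true.
rewrite /zsq (bigD1 j) /= ?pj //; apply: ltr_pwDl.
  by rewrite exprn_gt0 // invr_gt0 height_gt0.
by apply: sumr_ge0 => k _; rewrite sqr_ge0.
Qed.

Lemma zsq_neq0 : zsq != 0.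
Proof. by rewrite gt_eqF // zsq_gt0. Qed.

(* [foot0] has barycentric coordinates proportional to [height k ^- 2] on the
   vertices opposite [S_true]; this is what makes [foot0 + perp] land in
   [flat true]. *)
Definition foot_weight k := if part k then zsq^-1 * (height k)^-1 ^+ 2 else 0.
Definition foot0 := \sum_k foot_weight k *: v k.
Definition perp := zsq^-1 *: zdir true.
Definition foot1 := foot0 + perp.

Lemma foot_weight_sum : \sum_k foot_weight k = 1.
Proof.
rewrite /foot_weight -big_mkcond /= -mulr_sumr mulVf //; exact: zsq_neq0.
Qed.

Lemma dotv_normal_foot0 i :
  dotv (u i) foot0 = c i - (if part i then zsq^-1 * (height i)^-1 else 0).
Proof.
rewrite dotv_normal_comb ?foot_weight_sum // /foot_weight.
case: (part i) => /=; last by rewrite mulr0.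
by congr (_ - _); field; rewrite height_neq0 zsq_neq0.
Qed.

Lemma dotv_normal_perp i :
  dotv (u i) perp = if part i then zsq^-1 * (height i)^-1 else - (zsq^-1 * (height i)^-1).
Proof.
rewrite /perp dotvZr; case pi: (part i); first by rewrite /zdir dotv_normal_sum.
by rewrite -[zdir true]opprK -zdirN dotvNr /zdir dotv_normal_sum // mulrN.
Qed.

Lemma foot0_flat : flat false foot0.
Proof. by move=> i pi; rewrite dotv_normal_foot0 pi subr0. Qed.

Lemma foot1_flat : flat true foot1.
Proof. by move=> i pi; rewrite dotvDr dotv_normal_foot0 dotv_normal_perp pi subrK. Qed.

Lemma foot1B : foot1 - foot0 = perp.
Proof. by rewrite /foot1 addrC addKr. Qed.

Lemma zdir_orth b p q : flat b p -> flat b q -> dotv (zdir b) (p - q) = 0.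
Proof.
move=> fp fq; rewrite /zdir dotv_suml big1 // => i /eqP pi.
by rewrite dotvZl dotvBr fp // fq // subrr mulr0.
Qed.

Lemma perp_orth {b p q} : flat b p -> flat b q -> dotv perp (p - q) = 0.
Proof.
move=> fp fq; rewrite /perp dotvZl; case: b fp fq => fp fq.
  by rewrite zdir_orth ?mulr0.
by rewrite -[zdir true]opprK -zdirN dotvNl zdir_orth // oppr0 mulr0.
Qed.

Lemma perp_span b : perp = \sum_(i | part i == b) dotv (u i) perp *: u i.
Proof.
have {1}-> : perp = (if b then zsq^-1 else - zsq^-1) *: zdir b.
  by case: b; rewrite // zdirN scalerN scaleNr opprK.
rewrite /zdir scaler_sumr; apply: eq_bigr => i /eqP pi.
by rewrite dotv_normal_perp pi scalerA; case: b pi => _; rewrite ?mulNr.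
Qed.

Definition dev p q := (q - p) - perp.

Lemma dev_sub p q : dev p q = (q - foot1) - (p - foot0).
Proof. by rewrite /dev -foot1B !opprD !opprK addrACA. Qed.

Lemma dev_feet : dev foot0 foot1 = 0.
Proof. by rewrite dev_sub !subrr. Qed.

Lemma flat_dist2 {p q} : flat false p -> flat true q ->
  dotv (p - q) (p - q) = dotv perp perp + dotv (dev p q) (dev p q).
Proof.
move=> fp fq; rewrite -dotvNN opprB.
have -> : q - p = perp + dev p q by rewrite /dev subrKC.
have pd : dotv perp (dev p q) = 0.
  by rewrite dev_sub dotvBr (perp_orth fq foot1_flat) (perp_orth fp foot0_flat) subrr.
move: (dev p q) pd => e pd; rewrite dotvDl !dotvDr pd (dotvC e) pd; ring.
Qed.

Lemma dev_eq0 {p q} : flat false p -> flat true q -> dev p q = 0 ->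
  p = foot0 /\ q = foot1.
Proof.
move=> fp fq /eqP; rewrite dev_sub subr_eq0 => /eqP e.
have fp0 : p - foot0 = 0.
  apply: orthogonal_normals_eq0 => k _; case pk: (part k).
    by rewrite -e dotvBr fq // foot1_flat // subrr.
  by rewrite dotvBr fp // foot0_flat // subrr.
by split; apply/eqP; rewrite -subr_eq0 ?e fp0.
Qed.

Lemma proj_line b t : proj b (foot0 + t *: perp) = foot0 + (b : nat)%:R *: perp.
Proof.
rewrite /proj; have -> : offset b (foot0 + t *: perp) = (t - (b : nat)%:R) *: perp.
  rewrite {2}(perp_span b) scaler_sumr /offset; apply: eq_bigr => i /eqP pi.
  rewrite [RHS]scalerA; congr (_ *: _).
  by rewrite dotvDr dotvZr dotv_normal_foot0 dotv_normal_perp pi; case: b pi => /= _; ring.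
by rewrite scalerBl opprB -addrA subrKC.
Qed.

Definition dev_proj y := dev (proj false y) (proj true y).

Lemma dev_proj_line t : dev_proj (foot0 + t *: perp) = 0.
Proof. by rewrite /dev_proj !proj_line /= scale0r addr0 scale1r -/foot1 dev_feet. Qed.

Lemma proj_line_inv y : proj false y = foot0 -> proj true y = foot1 ->
  exists t, y = foot0 + t *: perp.
Proof.
move=> e0 e1.
have o0 : offset false y = y - foot0 by rewrite -e0 /proj subKr.
have o1 : offset true y = y - foot1 by rewrite -e1 /proj subKr.
pose al k := dotv (u k) y - c k.
pose gam k := if part k then - (al k + dotv (u k) perp) else al k.
have rel : \sum_k gam k *: u k = 0.
  rewrite sum_parts.
  have -> : \sum_(k | part k == false) gam k *: u k = offset false y.
    by apply: eq_bigr => k /eqP pk; rewrite /gam pk.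
  have -> : \sum_(k | part k == true) gam k *: u k = - (offset true y + perp).
    rewrite [in RHS](perp_span true) /offset -big_split -sumrN; apply: eq_bigr => k /eqP pk.
    by rewrite /gam pk /= -scalerDl -scaleNr.
  by rewrite o0 o1 -foot1B opprD addrA subrBB subrr.
have gam_height := normal_relation_unique _ rel.
set K := gam ord0 * height ord0 in gam_height.
exists (- (K * zsq)).
have -> : - (K * zsq) *: perp = offset false y.
  rewrite [in LHS](perp_span false) scaler_sumr /offset; apply: eq_bigr => k /eqP pk.
  rewrite scalerA; congr (_ *: _).
  rewrite dotv_normal_perp pk -(gam_height k) /gam pk.
  by rewrite /al; field; rewrite height_neq0 zsq_neq0.
by rewrite o0 subrKC.
Qed.

Lemma dev_proj_eq0 y : dev_proj y = 0 ->
  exists t, y = foot0 + t *: perp.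
Proof.
move=> d0; have [e0 e1] := dev_eq0 (proj_flat false y) (proj_flat true y) d0.
exact: proj_line_inv.
Qed.

Lemma wprod_disp2 b y :
  let w := wprod u c part in
  dotv (w b (w (~~ b) y) - y) (w b (w (~~ b) y) - y) =
  4 * (dotv perp perp + dotv (dev_proj y) (dev_proj y)).
Proof.
rewrite /= -{2 4}(wprodK b y) wprod_isometry.
have -> : dotv (wprod u c part (~~ b) y - wprod u c part b y)
    (wprod u c part (~~ b) y - wprod u c part b y) =
  dotv (wprod u c part false y - wprod u c part true y)
    (wprod u c part false y - wprod u c part true y).
  by case: b; rewrite //= -dotvNN !opprB.
rewrite /dev_proj wprod_sub dotvZl dotvZr.
by rewrite (flat_dist2 (proj_flat _ _) (proj_flat _ _)); ring.
Qed.

Lemma disp_minset_line (f : 'rV[R]_n -> 'rV[R]_n) :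
  (forall y, dotv (f y - y) (f y - y) = 4 * (dotv perp perp +
     dotv (dev_proj y) (dev_proj y))) ->
  disp_minset f = line_through foot0 foot1.
Proof.
move=> fE; apply/seteqP; split => y /=.
  move=> /(_ (foot0 + 0 *: perp)); rewrite normv_le !fE dev_proj_line dotv0l addr0.
  rewrite ler_pM2l // => /dotv_eq0_le /dev_proj_eq0 [t ->].
  by exists t; rewrite foot1B.
move=> [t ->] y'; rewrite foot1B normv_le !fE dev_proj_line dotv0l addr0.
by rewrite ler_pM2l // lerDl dotv_ge0.
Qed.

Lemma vertex_face b j : part j != b -> face v u c part b (v j).
Proof.
move=> pj; split; last first.
  by move=> i pi; apply: u_facet; apply: contraNneq pj => <-; rewrite pi.
exists (fun k => (k == j)%:R); split; first by move=> k; rewrite ler0n.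
split; first exact: sumr_indicator1.
by rewrite (bigD1 j) //= eqxx scale1r big1 ?addr0 // => k /negbTE ->; rewrite scale0r.
Qed.

Lemma aff_hull_face b : aff_hull (face v u c part b) = flat b.
Proof.
apply/seteqP; split => x /=.
  move=> [k [p [l [pF [l1 ->]]]]] i pi; rewrite dotv_sumr.
  under eq_bigr => t _ do rewrite dotvZr (proj2 (pF t) i pi).
  by rewrite -mulr_suml l1 mul1r.
move=> fx; have [j0 pj0] := part_nonempty (~~ b).
exists n.+1, (fun t => if part t == b then v j0 else v t), (barycoord x).
split.
  by move=> t; case: eqP => [_|/eqP pt]; apply: vertex_face; rewrite // pj0; case: b {fx pj0}.
split; first exact: barycoord_sum.
rewrite {1}(barycoordK x); apply: eq_bigr => t _; case: eqP => // /eqP pt.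
by rewrite /barycoord fx ?subrr ?mul0r ?scale0r //; apply/eqP.
Qed.

Lemma realizes_dist_flats x0 x1 :
  realizes_dist (flat false) (flat true) x0 x1 <-> x0 = foot0 /\ x1 = foot1.
Proof.
split=> [[f0 [f1 x_min]]|[-> ->]].
  apply: dev_eq0 => //; apply: dotv_eq0_le (dotv perp perp) _ _.
  have := x_min _ _ foot0_flat foot1_flat.
  rewrite normv_le (flat_dist2 f0 f1) (flat_dist2 foot0_flat foot1_flat).
  by rewrite dev_feet dotv0l addr0.
split; first exact: foot0_flat; split; first exact: foot1_flat.
move=> y0 y1 f0 f1; rewrite normv_le (flat_dist2 f0 f1) (flat_dist2 foot0_flat foot1_flat).
by rewrite dev_feet dotv0l addr0 lerDl dotv_ge0.
Qed.

Lemma foot0_neq_foot1 : foot0 != foot1.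
Proof.
apply/eqP => /(congr1 (fun x => x - foot0)); rewrite foot1B subrr => /esym p0.
have [j pj] := part_nonempty true; have := dotv_normal_perp j.
rewrite pj p0 dotv0r => /eqP; rewrite eq_sym mulf_eq0 !invr_eq0.
by rewrite (negbTE zsq_neq0) (negbTE (height_neq0 j)).
Qed.

Lemma bipartite_line_axis :
  let B0 := aff_hull (face v u c part false) in
  let B1 := aff_hull (face v u c part true) in
  let w0 := wprod u c part false in
  let w1 := wprod u c part true in
  (exists x0 x1, realizes_dist B0 B1 x0 x1) /\
  (forall x0 x1, realizes_dist B0 B1 x0 x1 ->
     x0 != x1 /\
     disp_minset (w1 \o w0) = line_through x0 x1 /\
     disp_minset (w0 \o w1) = line_through x0 x1).
Proof.
rewrite /= !aff_hull_face; split.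
  by exists foot0, foot1; apply/realizes_dist_flats.
move=> x0 x1 /realizes_dist_flats [-> ->]; split; first exact: foot0_neq_foot1.
by split; apply: disp_minset_line => y;
  [apply: (wprod_disp2 true) | apply: (wprod_disp2 false)].
Qed.

End Bipartite.
End Simplex.

Lemma bipartition_orthogonal (R : realType) (n : nat) (u : 'I_n.+1 -> 'rV[R]_n)
    (m : 'I_n.+1 -> 'I_n.+1 -> nat) (part : 'I_n.+1 -> bool) :
  dihedral_submultiples u m -> cox_bipartition m part ->
  forall i j, i != j -> part i = part j -> dotv (u i) (u j) = 0.
Proof.
move=> dih bip i j ij pij; have [_ ->] := dih i j ij.
by rewrite (bip i j ij pij) cos_pihalf oppr0.
Qed.

Lemma bipartition_nonempty (n : nat) (m : 'I_n.+1 -> 'I_n.+1 -> nat)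
    (part : 'I_n.+1 -> bool) :
  (1 <= n)%N -> cox_irreducible m -> cox_bipartition m part ->
  forall b, exists j, part j = b.
Proof.
move=> n_gt0 irr bip b.
have [/existsP [j /eqP pj]|/existsPn no_b] := boolP [exists j, part j == b].
  by exists j.
have same i j : part i = part j.
  by move: (no_b i) (no_b j); case: (part i); case: (part j); case: (b).
have /connectP [[|k p] /= edges last_p] := irr ord0 ord_max.
  by move/(congr1 val): last_p => /= n0; rewrite n0 in n_gt0.
by move: edges; rewrite /cox_edge; case: eqP => //= /eqP ok; rewrite bip.
Qed.

Theorem proposition8p8 (R : realType) (n : nat)
  (v u : 'I_n.+1 -> 'rV[R]_n) (c : 'I_n.+1 -> R)
  (m : 'I_n.+1 -> 'I_n.+1 -> nat) (part : 'I_n.+1 -> bool) :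
  (2 <= n)%N ->
  is_simplex_data v u c ->
  dihedral_submultiples u m ->
  cox_irreducible m ->
  ~ is_type_tildeA m ->
  cox_bipartition m part ->
  let B0 := aff_hull (face v u c part false) in
  let B1 := aff_hull (face v u c part true) in
  let w0 := wprod u c part false in
  let w1 := wprod u c part true in
  (exists x0 x1, realizes_dist B0 B1 x0 x1) /\
  (forall x0 x1, realizes_dist B0 B1 x0 x1 ->
     x0 != x1 /\
     disp_minset (w1 \o w0) = line_through x0 x1 /\
     disp_minset (w0 \o w1) = line_through x0 x1).
Proof.
move=> n_ge2 [u_unit [u_facet u_vertex]] dih irr _ bip.
apply: bipartite_line_axis => //.
- exact: bipartition_orthogonal dih bip.
- exact: bipartition_nonempty (ltnW n_ge2) irr bip.
Qed.
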